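(* Let $xy$ be a heavy pair such that $y$ lies strictly above $r(x)$ on the path $\pi(s,u_{H_x})$ and the $T$-edge $(y,y_h)$ lies on $\pi_x(s,H_x)$. Let $\widehat C(x,y)=\bigcup\{C\in\mathcal{C}_x:(y,y_h)\in\pi_x(s,C)\}$. Then $G\setminus\{x,y\}$ is connected if and only if there is an edge of $G\setminus\{x,y\}$ with exactly one endpoint in $\widehat C(x,y)\cup H_y$.
   Context: $G=(V,E)$ is a connected graph with no cut vertex, $T$ a BFS tree rooted at $s$, $\pi(u,v)$ the $T$-path, $T_x$ the subtree at $x$, $V_x=V(T_x)\setminus\{x\}$. The heavy child $x_h$ of a non-leaf $x$ is its child with largest subtree (ties broken consistently). $\mathcal{C}_x$ is the set of components of $G[V_x]$, $C_{x,v}$ the one containing $v$, and $H_x=C_{x,x_h}$. For each $C\in\mathcal{C}_x$ a fixed edge $(u_C,v_C)\in E$ with $v_C\in C$, $u_C\notin V(T_x)$, and $\pi_x(s,C)=\pi(s,u_C)\circ(u_C,v_C)$. $R(x)=\{v\in V\setminus V(T_x):v\text{ has a neighbour in }H_x\}$ and $r(x)$ is the $T$-lowest common ancestor of $R(x)$. $x,y$ is independent if neither is a $T$-ancestor of the other. For independent $x,y$, $C\in\mathcal{C}_x$ is fully-$y$-sensitive if $y\in\pi_x(s,C)$ and $\pi_x(s,C)$ contains no $T$-edge $(y,y')$ with $x\notin\pi_y(s,C_{y,y'})$; $\mathcal{FS}(x,y)$ is the set of such components. $\langle x,y\rangle$ is an ordered light pair if some $C\in\mathcal{FS}(x,y)$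 has $(y,y_h)\notin\pi_x(s,C)$; an independent pair $xy$ is heavy if neither ordering is an ordered light pair. *)

(* finite simple graphs as symmetric irreflexive relations. *)
From mathcomp Require Import all_boot.
Set Implicit Arguments. Unset Strict Implicit. Unset Printing Implicit Defensive.

Section GraphDefs.
Variable T : finType.
Variable e : rel T.

Definition er (A : {set T}) : rel T :=
  fun a b => [&& e a b, a \in A & b \in A].

Definition connectedIn (A : {set T}) : Prop :=
  forall a b, a \in A -> b \in A -> connect (er A) a b.

Definition crossing_edge (A S : {set T}) : Prop :=
  exists a b, [/\ e a b, a \in A, b \in A & (a \in S) != (b \in S)].

Variable s : T.
Variable par : T -> T.  (* parent function of the rooted tree T; par s = s *)

Definition anc (a v : T) : bool := [exists k : 'I_#|T|.+1, iter k par v == a].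

Definition bfs_tree : Prop :=
  [/\ par s = s,
      (forall v, v != s -> par v != v /\ e v (par v)),
      (forall v, exists k, iter k par v = s) &
      (* the tree path from v to s is a shortest s-v path in G *)
      (forall v p, path e s p -> last s p = v ->
         exists2 k, k <= size p & iter k par v = s)].

Definition tedge (a b : T) : bool := (par b == a) && (b != a).

Definition subtree (x : T) : {set T} := [set v | anc x v].
Definition Vx (x : T) : {set T} := subtree x :\ x.

Variable hc : T -> T.

Definition heavy_child_spec : Prop :=
  forall x, (exists c, tedge x c) ->
    tedge x (hc x) /\ forall c, tedge x c -> #|subtree c| <= #|subtree (hc x)|.

(* C_{x,v} : component of G[V_x] containing v (empty if v \notin V_x) *)
Definition comp (x v : T) : {set T} :=
  [set w | (w \in Vx x) && connect (er (Vx x)) v w].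

Definition comps (x : T) : {set {set T}} := [set comp x v | v in Vx x].

Definition Hx (x : T) : {set T} := comp x (hc x).

Variables uC vC : T -> {set T} -> T.

Definition fixed_edges_spec : Prop :=
  forall x C, x != s -> C \in comps x ->
    [/\ e (uC x C) (vC x C), vC x C \in C & uC x C \notin subtree x].

(* vertex v lies on pi_x(s,C) = pi(s,u_C) o (u_C,v_C) *)
Definition pvert (x : T) (C : {set T}) (v : T) : bool :=
  anc v (uC x C) || (v == vC x C).

Definition pedge (x : T) (C : {set T}) (a b : T) : bool :=
  [|| anc b (uC x C) && tedge a b,
      anc a (uC x C) && tedge b a,
      (a == uC x C) && (b == vC x C) |
      (b == uC x C) && (a == vC x C)].

Definition tpedge (x : T) (C : {set T}) (a b : T) : bool :=
  tedge a b && pedge x C a b.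

Definition independent (x y : T) : bool := ~~ anc x y && ~~ anc y x.

Definition fully_sensitive (x y : T) (C : {set T}) : bool :=
  [&& C \in comps x, pvert x C y &
      [forall y', tpedge x C y y' ==> pvert y (comp y y') x]].

Definition FS (x y : T) : {set {set T}} := [set C | fully_sensitive x y C].

Definition ordered_light (x y : T) : bool :=
  [exists C in FS x y, ~~ tpedge x C y (hc y)].

Definition heavy_pair (x y : T) : bool :=
  [&& independent x y, ~~ ordered_light x y & ~~ ordered_light y x].

Definition Rset (x : T) : {set T} :=
  [set v | (v \notin subtree x) && [exists w in Hx x, e v w]].

Definition is_lca (S : {set T}) (r : T) : Prop :=
  (forall v, v \in S -> anc r v) /\
  (forall r', (forall v, v \in S -> anc r' v) -> anc r' r).

Definition Chat (x y : T) : {set T} :=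
  \bigcup_(C in comps x | tpedge x C y (hc y)) C.

End GraphDefs.

From Pilot Require Import Defs.
From mathcomp Require Import all_boot.
Set Implicit Arguments. Unset Strict Implicit. Unset Printing Implicit Defensive.

(* Write A for V \ {x, y} and S for Chat(x, y) ∪ H_y.  Every vertex of S is joined
   to the heavy child y_h inside G[A]: H_y is connected, and each component of
   Chat(x, y) is attached by its fixed edge to a vertex below y_h.  Every other
   vertex of A reaches s inside G[A].  Outside T_x ∪ T_y the tree path does.  A
   component C of G[V_x] that cannot reach s is fully-y-sensitive, for otherwise
   the T-edge (y, y') on pi_x(s, C) leads to a component of G[V_y] whose own path
   to s avoids x; as xy is heavy, C then lies in Chat(x, y).  Symmetrically, a
   component of G[V_y] that cannot reach s is attached to H_x, hence to a vertex of
   R(x), which lies below r(x) and thus below y_h; so it is H_y.  Since s is not in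
   S, G[A] is connected iff y_h reaches s, iff some edge of G[A] leaves S. *)

Section Tree.
Variables (T : finType) (par : T -> T).

Lemma ancP a v : reflect (exists k, iter k par v = a) (anc par a v).
Proof.
apply: (iffP existsP) => [[k /eqP <-]|[k <-]]; first by exists k.
have fcon := fconnect_iter par k v.
have lt_order : findex par v (iter k par v) < #|T|.+1.
  apply/ltnW/(leq_trans (findex_max fcon)).
  by rewrite -size_orbit; have /card_uniqP <- := orbit_uniq par v; apply: max_card.
by exists (Ordinal lt_order); rewrite /= iter_findex.
Qed.

Lemma anc_refl v : anc par v v. Proof. by apply/ancP; exists 0. Qed.

Lemma anc_par v : anc par (par v) v. Proof. by apply/ancP; exists 1. Qed.

Lemma anc_trans a b c : anc par a b -> anc par b c -> anc par a c.
Proof. by move=> /ancP[i <-] /ancP[j <-]; apply/ancP; exists (i + j); rewrite iterD. Qed.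

Lemma anc_total a b v : anc par a v -> anc par b v -> anc par a b || anc par b a.
Proof.
move=> /ancP[i <-] /ancP[j <-]; case: (leqP i j) => [le_ij|/ltnW le_ji].
  by apply/orP; right; apply/ancP; exists (j - i); rewrite -iterD subnK.
by apply/orP; left; apply/ancP; exists (i - j); rewrite -iterD subnK.
Qed.

Lemma anc_parent a c : anc par a c -> a = c \/ anc par a (par c).
Proof.
move=> /ancP[[|k] <-]; [by left | right].
by apply/ancP; exists k; rewrite -iterSr.
Qed.

Lemma tedge_anc a b : tedge par a b -> anc par a b.
Proof. by case/andP=> /eqP <- _; apply: anc_par. Qed.

Variable s : T.
Hypothesis par_root : par s = s.
Hypothesis par_reach : forall v, exists k, iter k par v = s.

Lemma iter_root k : iter k par s = s.
Proof. by elim: k => //= k ->. Qed.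

Lemma anc_root v : anc par s v.
Proof. exact/ancP/par_reach. Qed.

Lemma anc_antisym a b : anc par a b -> anc par b a -> a = b.
Proof.
move=> /ancP[i ib] /ancP[j ja].
case: (posnP (j + i)) => [/eqP|ji_gt0].
  by rewrite addn_eq0 => /andP[_ /eqP i0]; rewrite -ib i0.
have periodic n : iter (n * (j + i)) par b = b.
  by elim: n => // n IH; rewrite mulSn iterD IH iterD ib ja.
have [k kb] := par_reach b.
have b_root : b = s.
  by rewrite -(periodic k) -(subnK (leq_pmulr k ji_gt0)) iterD kb iter_root.
by rewrite -ib b_root iter_root.
Qed.

Lemma anc_rootE a : anc par a s -> a = s.
Proof. by move/anc_antisym; apply; apply: anc_root. Qed.

Lemma tedge_Vx a c z : tedge par a c -> anc par c z -> z \in Vx par a.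
Proof.
move=> ac cz; rewrite !inE (anc_trans (tedge_anc ac) cz) andbT.
apply/eqP=> za; move: cz; rewrite za => ca.
by have := anc_antisym ca (tedge_anc ac); case/andP: ac => _ /eqP.
Qed.

Lemma root_notin_Vx t : s \notin Vx par t.
Proof. by rewrite !inE; apply/andP => -[/eqP + /anc_rootE ts]; rewrite ts. Qed.

Lemma independentC p q : independent par p q = independent par q p.
Proof. by rewrite /independent andbC. Qed.

Lemma independent_neq_root p q : independent par p q -> p != s.
Proof. by case/andP=> pq _; apply: contraNneq pq => ->; apply: anc_root. Qed.

Lemma independent_disjoint p q z :
  independent par p q -> anc par p z -> anc par q z -> False.
Proof.
by case/andP=> pq qp pz qz; move: (anc_total pz qz); rewrite (negbTE pq) (negbTE qp).
Qed.

Lemma Vx_independent p q z : independent par p q -> z \in Vx par p -> z != q.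
Proof. by case/andP=> pq _; rewrite !inE => /andP[_]; apply: contraTneq => ->. Qed.

Variable e : rel T.
Hypothesis e_sym : symmetric e.

Lemma er_sym B : symmetric (er e B).
Proof. by move=> a b; rewrite /er e_sym; congr (_ && _); apply: andbC. Qed.

Lemma connect_erC B a b : connect (er e B) a b = connect (er e B) b a.
Proof. exact/sym_connect_sym/er_sym. Qed.

Lemma connect_erS (B B' : {set T}) a b :
  {subset B <= B'} -> connect (er e B) a b -> connect (er e B') a b.
Proof.
move=> sBB'; apply: connect_sub => u v /and3P[uv uB vB].
by apply: connect1; rewrite /er uv !sBB'.
Qed.

Lemma connect_er_mem B a b : connect (er e B) a b -> b \in B -> a \in B.
Proof. by case/connectP=> -[|c p] /= => [_ -> //|/andP[/and3P[]]]. Qed.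

Lemma connect_exit (r : rel T) (S : {set T}) a b :
  connect r a b -> a \in S -> b \notin S ->
  exists u v, [/\ r u v, u \in S & v \notin S].
Proof.
case/connectP=> p; elim: p a => [|c p IH] a /=; first by move=> _ -> ->.
case/andP=> ac pc bl aS bS; case cS: (c \in S); first exact: IH pc bl cS bS.
by exists a, c; rewrite cS.
Qed.

Lemma connectedIn_crossing (B S : {set T}) h t :
  h \in S -> h \in B -> t \in B -> t \notin S ->
  (forall z, z \in S -> connect (er e B) z h) ->
  (forall z, z \in B -> connect (er e B) z t \/ z \in S) ->
  connectedIn e B <-> crossing_edge e B S.
Proof.
move=> hS hB tB tS S_h B_tS; split=> [B_conn | [a [b [ab aB bB abS]]]].
  have [u [v [/and3P[uv uB vB] uS vS]]] := connect_exit (B_conn h t hB tB) hS tS.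
  by exists u, v; rewrite uS (negbTE vS).
have [a' [b' [a'b' a'S b'S]]] :
    exists a' b', [/\ er e B a' b', a' \in S & b' \notin S].
  case: (boolP (a \in S)) abS => aS /= => [bS|/negPn bS].
    by exists a, b; rewrite /er ab aB bB.
  by exists b, a; rewrite /er e_sym ab aB bB.
have h_t : connect (er e B) h t.
  have b'B : b' \in B by case/and3P: a'b'.
  have [b'_t|] := B_tS b' b'B; last by rewrite (negbTE b'S).
  have h_a' : connect (er e B) h a' by rewrite connect_erC S_h.
  exact: connect_trans (connect_trans h_a' (connect1 a'b')) b'_t.
have B_t z : z \in B -> connect (er e B) z t.
  by case/B_tS => // /S_h z_h; apply: connect_trans z_h h_t.
by move=> u v uB vB; apply: connect_trans (B_t u uB) _; rewrite connect_erC; apply: B_t.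
Qed.

Hypothesis par_edge : forall v, v != s -> e v (par v).

Lemma connect_anc (B : {set T}) c v :
  anc par c v -> (forall z, anc par c z -> anc par z v -> z \in B) ->
  connect (er e B) v c.
Proof.
move=> /ancP[k]; elim: k v => [|k IH] v; first by move=> /= -> _; apply: connect0.
rewrite iterSr => kc inB.
have cv : anc par c v by apply/ancP; exists k.+1; rewrite iterSr.
have cpv : anc par c (par v) by apply/ancP; exists k.
apply: connect_trans (IH _ kc _); last first.
  by move=> z cz zpv; apply: inB cz (anc_trans zpv (anc_par v)).
case: (eqVneq v s) => [->|vs]; first by rewrite par_root connect0.
by apply: connect1; rewrite /er par_edge // (inB v) ?anc_refl // (inB (par v)) ?anc_par.
Qed.

Lemma comp_self t w : w \in Vx par t -> w \in Defs.comp e par t w.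
Proof. by move=> wt; rewrite inE wt connect0. Qed.

Lemma comps_Vx t C z : C \in comps e par t -> z \in C -> z \in Vx par t.
Proof. by case/imsetP=> w _ -> /[!inE] /andP[]. Qed.

Lemma comp_eq t a b : b \in Defs.comp e par t a -> Defs.comp e par t b = Defs.comp e par t a.
Proof.
rewrite inE => /andP[_ ab]; apply/setP=> z.
by rewrite !inE (same_connect (sym_connect_sym (er_sym _)) ab).
Qed.

Lemma comps_connect t C a b :
  C \in comps e par t -> a \in C -> b \in C -> connect (er e (Vx par t)) a b.
Proof.
case/imsetP=> w _ -> /comp_eq aw.
by rewrite -aw inE => /andP[].
Qed.

Lemma comp_child t c z : tedge par t c -> anc par c z -> z \in Defs.comp e par t c.
Proof.
move=> tc cz; rewrite inE (tedge_Vx tc cz) connect_erC.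
by apply: connect_anc cz _ => y cy _; apply: tedge_Vx tc cy.
Qed.

Variables (hc : T -> T) (uC vC : T -> {set T} -> T).
Hypothesis uv_spec : fixed_edges_spec e s par uC vC.

Lemma tpedge_anc_uC p q C c : independent par p q -> C \in comps e par p ->
  tpedge par uC vC p C q c -> anc par c (uC p C).
Proof.
move=> pq pC /andP[qc]; have [_ vC_in _] := uv_spec (independent_neq_root pq) pC.
have vC_Vx := comps_Vx pC vC_in.
case/or4P=> [/andP[]// | /andP[_ cq] | /andP[_ /eqP cv] | /andP[_ /eqP qv]].
- by have := anc_antisym (tedge_anc cq) (tedge_anc qc); case/andP: qc => _ /eqP.
- move: vC_Vx; rewrite -cv !inE => /andP[_ p_c].
  by case: (independent_disjoint pq p_c (tedge_anc qc)).
- by move: (Vx_independent pq vC_Vx); rewrite -qv eqxx.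
Qed.

Lemma connect_comp_uC (B : {set T}) t C w z :
  t != s -> C \in comps e par t -> w \in C -> {subset Vx par t <= B} -> z \in B ->
  connect (er e B) (uC t C) z -> connect (er e B) w z.
Proof.
move=> ts tC wC VxB zB uz; have [uv vC_in _] := uv_spec ts tC.
have uB := connect_er_mem uz zB.
apply: connect_trans (connect_erS VxB (comps_connect tC wC vC_in)) _.
apply: connect_trans uz; apply: connect1.
by rewrite /er e_sym uv uB VxB ?(comps_Vx tC).
Qed.

Section AvoidingIndependentPair.
Variables p q : T.
Hypothesis pq : independent par p q.
Local Notation A := (setT :\ p :\ q).

Lemma mem_avoid z : (z \in A) = (z != p) && (z != q).
Proof. by rewrite !inE andbT andbC. Qed.

Lemma root_avoid : s \in A.
Proof.
have qp : independent par q p by rewrite independentC.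
by rewrite mem_avoid !(eq_sym s) (independent_neq_root pq) (independent_neq_root qp).
Qed.

Lemma Vx_avoidl : {subset Vx par p <= A}.
Proof. by move=> z zp; rewrite mem_avoid (Vx_independent pq zp); case/setD1P: zp => ->. Qed.

Lemma Vx_avoidr : {subset Vx par q <= A}.
Proof.
move=> z zq; have qp : independent par q p by rewrite independentC.
by rewrite mem_avoid (Vx_independent qp zq); case/setD1P: zq.
Qed.

Lemma connect_root_outside v :
  ~~ anc par p v -> ~~ anc par q v -> connect (er e A) v s.
Proof.
move=> pv qv; apply: connect_anc (anc_root v) _ => z _ zv.
by rewrite mem_avoid; apply/andP; split; [apply: contraNneq pv | apply: contraNneq qv] => <-.
Qed.

Lemma uC_connect_root_or_FS C : C \in comps e par p ->
  connect (er e A) (uC p C) s \/ C \in FS e par uC vC p q.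
Proof.
move=> pC; have [_ vC_in u_out] := uv_spec (independent_neq_root pq) pC.
have p_u : ~~ anc par p (uC p C) by rewrite inE in u_out.
have [q_u|q_u] := boolP (anc par q (uC p C)); last by left; apply: connect_root_outside.
have [|notFS] := boolP (C \in FS e par uC vC p q); [by right | left].
have [c qc_on p_off] : exists2 c, tpedge par uC vC p C q c &
    ~~ pvert par uC vC q (Defs.comp e par q c) p.
  move: notFS; rewrite inE /fully_sensitive pC /pvert q_u /= => /forallPn[c].
  by rewrite negb_imply => /andP[]; exists c.
have qc : tedge par q c by case/andP: qc_on.
have qp : independent par q p by rewrite independentC.
have qD : Defs.comp e par q c \in comps e par q by apply/imset_f/(tedge_Vx qc (anc_refl c)).
have [_ _ uD_out] := uv_spec (independent_neq_root qp) qD.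
have uD_root : connect (er e A) (uC q (Defs.comp e par q c)) s.
  by apply: connect_root_outside; [case/norP: p_off | rewrite inE in uD_out].
have c_root : connect (er e A) c s.
  apply: connect_comp_uC (independent_neq_root qp) qD _ Vx_avoidr root_avoid uD_root.
  exact/comp_self/(tedge_Vx qc (anc_refl c)).
apply: connect_trans c_root; rewrite connect_erC; apply: connect_erS Vx_avoidr _.
by move: (comp_child qc (tpedge_anc_uC pq pC qc_on)); rewrite inE => /andP[].
Qed.

Lemma Vx_connect_root_or_FS w : w \in Vx par p ->
  connect (er e A) w s \/ Defs.comp e par p w \in FS e par uC vC p q.
Proof.
move=> wp; have pC : Defs.comp e par p w \in comps e par p by apply: imset_f.
case: (uC_connect_root_or_FS pC) => [u_root|]; [left | by right].
exact: connect_comp_uC (independent_neq_root pq) pC (comp_self wp) Vx_avoidl root_avoid u_root.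
Qed.
End AvoidingIndependentPair.

Lemma not_ordered_light_tpedge x y C :
  ~~ ordered_light e par hc uC vC x y -> C \in FS e par uC vC x y ->
  tpedge par uC vC x C y (hc y).
Proof. by move=> /existsPn/(_ C) /nandP[/negP //|/negPn]. Qed.

Lemma Chat_of_FS x y z :
  ~~ ordered_light e par hc uC vC x y -> z \in Vx par x ->
  Defs.comp e par x z \in FS e par uC vC x y -> z \in Chat e par hc uC vC x y.
Proof.
move=> nl zx zFS; apply/bigcupP; exists (Defs.comp e par x z); last exact: comp_self.
by rewrite imset_f //= not_ordered_light_tpedge.
Qed.

Section HeavyPairAboveLca.
Variables x y r : T.
Hypothesis xy : independent par x y.
Hypotheses (nl_xy : ~~ ordered_light e par hc uC vC x y)
  (nl_yx : ~~ ordered_light e par hc uC vC y x).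
Hypothesis r_lca : is_lca par (Rset e par hc x) r.
Hypotheses (y_r : anc par y r) (y_neq_r : y != r).
Hypothesis yyh_on : tpedge par uC vC x (Hx e par hc x) y (hc y).

Lemma heavy_child_anc_lca : tedge par x (hc x) -> anc par (hc y) r.
Proof.
move=> xhx; have xH : Hx e par hc x \in comps e par x.
  exact/imset_f/(tedge_Vx xhx (anc_refl _)).
have [uv vH u_out] := uv_spec (independent_neq_root xy) xH.
have uR : uC x (Hx e par hc x) \in Rset e par hc x.
  by rewrite inE u_out; apply/existsP; exists (vC x (Hx e par hc x)); rewrite vH.
case/orP: (anc_total (tpedge_anc_uC xy xH yyh_on) (r_lca.1 _ uR)) => // r_hy.
case: (anc_parent r_hy) => [-> | ]; first exact: anc_refl.
case/andP: yyh_on => /andP[/eqP -> _] _ r_y.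
by move: y_neq_r; rewrite (anc_antisym y_r r_y) eqxx.
Qed.

Lemma Hx_of_FS z : z \in Vx par y ->
  Defs.comp e par y z \in FS e par uC vC y x -> z \in Hx e par hc y.
Proof.
move=> zy zFS; set C := Defs.comp e par y z.
have yC : C \in comps e par y by apply: imset_f.
have yx : independent par y x by rewrite independentC.
have C_on := not_ordered_light_tpedge nl_yx zFS.
have xhx : tedge par x (hc x) by case/andP: C_on.
have yhy : tedge par y (hc y) by case/andP: yyh_on.
have [uv vC_in _] := uv_spec (independent_neq_root yx) yC.
have u_Hx : uC y C \in Hx e par hc x := comp_child xhx (tpedge_anc_uC yx yC C_on).
have vR : vC y C \in Rset e par hc x.
  rewrite !inE; apply/andP; split.
    apply/negP => x_v; have := comps_Vx yC vC_in; rewrite !inE => /andP[_ y_v].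
    exact: independent_disjoint xy x_v y_v.
  by apply/existsP; exists (uC y C); rewrite u_Hx e_sym.
have v_Hy := comp_child yhy (anc_trans (heavy_child_anc_lca xhx) (r_lca.1 _ vR)).
by rewrite /Hx -(comp_eq v_Hy) (comp_eq vC_in) comp_self.
Qed.

Local Notation A := (setT :\ x :\ y).
Local Notation S := (Chat e par hc uC vC x y :|: Hx e par hc y).

Lemma root_notin_S : s \notin S.
Proof.
apply/negP; case/setUP => [/bigcupP[C /andP[xC _] /(comps_Vx xC)] | ].
  exact: (negP (root_notin_Vx x)).
by rewrite /Hx inE => /andP[/(negP (root_notin_Vx y))].
Qed.

Lemma S_connect_heavy_child z : z \in S -> connect (er e A) z (hc y).
Proof.
have yhy : tedge par y (hc y) by case/andP: yyh_on.
have hy_A : hc y \in A := Vx_avoidr xy (tedge_Vx yhy (anc_refl _)).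
case/setUP=> [/bigcupP[C /andP[xC C_on] zC] | ]; last first.
  by rewrite inE connect_erC => /andP[_]; apply: connect_erS (Vx_avoidr xy).
have := comp_child yhy (tpedge_anc_uC xy xC C_on); rewrite inE connect_erC => /andP[_].
move/(connect_erS (Vx_avoidr xy)).
exact: connect_comp_uC (independent_neq_root xy) xC zC (Vx_avoidl xy) hy_A.
Qed.

Lemma avoid_connect_root_or_S z : z \in A -> connect (er e A) z s \/ z \in S.
Proof.
rewrite mem_avoid => /andP[zx zy].
have [x_z|x_z] := boolP (anc par x z).
  have zVx : z \in Vx par x by rewrite !inE zx.
  case: (Vx_connect_root_or_FS xy zVx) => [|zFS]; [by left | right].
  by rewrite inE Chat_of_FS.
have [y_z|y_z] := boolP (anc par y z); last by left; apply: connect_root_outside.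
have zVy : z \in Vx par y by rewrite !inE zy.
have yx : independent par y x by rewrite independentC.
case: (Vx_connect_root_or_FS yx zVy) => [z_root|zFS]; [left | right].
  by rewrite !setDDl setUC in z_root; rewrite !setDDl.
by rewrite inE Hx_of_FS ?orbT.
Qed.
End HeavyPairAboveLca.

End Tree.

Theorem claim4p25 (T : finType) (e : rel T) (s : T) (par hc : T -> T)
    (uC vC : T -> {set T} -> T)
    (e_sym : symmetric e) (e_irr : irreflexive e)
    (G_conn : connectedIn e setT)
    (G_nocut : forall v, connectedIn e (setT :\ v))
    (T_bfs : bfs_tree e s par)
    (hc_spec : heavy_child_spec par hc)
    (uv_spec : fixed_edges_spec e s par uC vC)
    (x y r : T)
    (xy_heavy : heavy_pair e par hc uC vC x y)
    (r_lca : is_lca par (Rset e par hc x) r)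
    (y_on_path : anc par y (uC x (Hx e par hc x)))
    (y_above : anc par y r) (y_ne_r : y != r)
    (yyh_on : tpedge par uC vC x (Hx e par hc x) y (hc y)) :
  connectedIn e (setT :\ x :\ y) <->
  crossing_edge e (setT :\ x :\ y) (Chat e par hc uC vC x y :|: Hx e par hc y).
Proof.
case: T_bfs => par_root par_edge par_reach _.
have {}par_edge v : v != s -> e v (par v) by case/par_edge.
case/and3P: xy_heavy => xy nl_xy nl_yx.
have yhy : tedge par y (hc y) by case/andP: yyh_on.
have hy_Vy := tedge_Vx par_root par_reach yhy (anc_refl par (hc y)).
apply: (connectedIn_crossing e_sym (h := hc y) (t := s)).
- by apply/setUP; right; apply: comp_self.
- exact: (Vx_avoidr xy hy_Vy).
- exact: (root_avoid par_reach xy).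
- exact: (root_notin_S par_root par_reach).
- exact: (S_connect_heavy_child par_root par_reach e_sym par_edge uv_spec xy yyh_on).
- exact: (avoid_connect_root_or_S par_root par_reach e_sym par_edge uv_spec
    xy nl_xy nl_yx r_lca y_above y_ne_r yyh_on).
Qed.
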